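(* Let \(G\) be a graph with \(\mathrm{surplus}(G)\geq 2\), and let \(V(G)=O\uplus I\uplus P\) be the Gallai–Edmonds decomposition of \(G\). If \(I\cup P\) is an independent set in \(G\), then: (1) there is at least one vertex \(o\in O\) which has at least two neighbours in \(O\); (2) if \(v\in O\) is a neighbour of some vertex \(o\in O\), \(G'=G[V(G)\setminus\{o\}]\), and \(V(G')=O'\uplus I'\uplus P'\) is the Gallai–Edmonds decomposition of \(G'\), then the induced subgraph \(G'[P']\) contains at least one edge.
   Context: All graphs are finite, undirected and simple. For \(X\subseteq V(G)\), \(N(X)\) is the set of vertices not in \(X\) adjacent to some vertex of \(X\). The surplus of an independent set \(X\) is \(|N(X)|-|X|\); \(\mathrm{surplus}(G)\) is the minimum surplus over all nonempty independent sets of \(G\). The Gallai–Edmonds decomposition of a graph \(H\) is the partition \(V(H)=O\uplus I\uplus P\) where \(O\) is the set of vertices \(v\) such that some maximum matching of \(H\) leaves \(v\) unsaturated, \(I=N(O)\), and \(P=V(H)\setminus(I\cup O)\). *)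

From mathcomp Require Import all_boot.
Set Implicit Arguments. Unset Strict Implicit. Unset Printing Implicit Defensive.

(* A simple graph: vertex type T : finType, adjacency e : rel T, assumed
   symmetric and irreflexive (hypotheses of the theorem).  Induced subgraphs
   G[S] are handled by carrying the vertex set S : {set T}. *)

Section Graph.
Variables (T : finType) (e : rel T).

Definition independent (X : {set T}) : bool :=
  [forall x in X, forall y in X, ~~ e x y].

Definition nbhd (S X : {set T}) : {set T} :=
  [set y in S | (y \notin X) && [exists x in X, e x y]].

Definition surplus_ge (k : nat) : bool :=
  [forall X : {set T}, (independent X && (X != set0)) ==>
     (#|X| + k <= #|nbhd [set: T] X|)].

Definition is_matching (S : {set T}) (M : {set {set T}}) : bool :=
  [forall E in M, exists x in S, exists y in S, e x y && (E == [set x; y])] &&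
  [forall E1 in M, forall E2 in M, (E1 != E2) ==> [disjoint E1 & E2]].

Definition is_max_matching (S : {set T}) (M : {set {set T}}) : bool :=
  is_matching S M &&
  [forall M' : {set {set T}}, is_matching S M' ==> (#|M'| <= #|M|)].

Definition saturates (M : {set {set T}}) (v : T) : bool :=
  [exists E in M, v \in E].

Definition GE_O (S : {set T}) : {set T} :=
  [set v in S | [exists M : {set {set T}}, is_max_matching S M && ~~ saturates M v]].

Definition GE_I (S : {set T}) : {set T} := nbhd S (GE_O S).

Definition GE_P (S : {set T}) : {set T} := S :\: (GE_I S :|: GE_O S).

End Graph.

From mathcomp Require Import all_boot.
Set Implicit Arguments. Unset Strict Implicit. Unset Printing Implicit Defensive.

(* Two exchange arguments on maximum matchings drive the proof.  If o, v in O
   are adjacent, take a maximum matching missing o; it covers v, and trading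
   the edge vw at v for ov shows that w is in O as well, so v has a second
   neighbour in O.  If o is in O and u in O' = O(G - o), then a maximum matching
   of G - o is maximum in G, hence u is not adjacent to o, and an alternating
   path argument shows that every neighbour of u in O other than o lies in O'.
   For (2) this leaves v and w outside O' and outside N(O'), i.e. in P'.
   For (1), if O were independent then, since I ∪ P is independent, a maximum
   matching M covers I = N(O) with at most one vertex per edge and every edge
   of M meets O, so |O| + 1 <= |I| <= |M| <= |O|. *)

Lemma cover_setU1 (T : finType) (A : {set T}) (P : {set {set T}}) :
  cover (A |: P) = A :|: cover P.
Proof. by rewrite /cover bigcup_setU big_set1. Qed.

Lemma leq_card_trivIset (T : finType) (P : {set {set T}}) (Y : {set T}) :
  trivIset P -> {in P, forall E, E :&: Y != set0} -> #|P| <= #|Y|.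
Proof.
move=> tiP meetY; apply: leq_trans (leq_imset_card (pblock P) Y).
apply: subset_leq_card; apply/subsetP=> E EP.
have /set0Pn[y /setIP[yE yY]] := meetY E EP.
by apply/imsetP; exists y; rewrite // (def_pblock tiP EP yE).
Qed.

Section Matchings.
Variables (T : finType) (e : rel T).
Hypotheses (e_sym : symmetric e) (e_irr : irreflexive e).
Implicit Types (S X Y : {set T}) (M N : {set {set T}}).
Local Notation matching := (is_matching e setT).

Lemma saturatesE M v : saturates M v = (v \in cover M).
Proof. by apply/existsP/bigcupP => [[E /andP[]]|[E]]; exists E => //; apply/andP. Qed.

Lemma independentP X : reflect {in X &, forall x y, ~~ e x y} (independent e X).
Proof.
apply: (iffP forallP) => [h x y xX yX|h x].
  by move/implyP: (h x) => /(_ xX) /forallP /(_ y) /implyP; apply.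
by apply/implyP=> xX; apply/forallP=> y; apply/implyP; apply: h.
Qed.

Lemma independentS X Y : X \subset Y -> independent e Y -> independent e X.
Proof.
move=> /subsetP XY /independentP indY; apply/independentP=> x y xX yX.
by apply: indY; apply: XY.
Qed.

Lemma is_matchingP S M :
  reflect ((forall E, E \in M -> exists x y, [/\ x \in S, y \in S, e x y & E = [set x; y]])
           /\ trivIset M)
          (is_matching e S M).
Proof.
apply: (iffP andP) => [[/forallP edgeM /forallP disjM]|[edgeM /trivIsetP disjM]]; split.
- move=> E EM; move/implyP: (edgeM E) => /(_ EM) /existsP[x /andP[xS /existsP[y]]].
  by case/and3P=> yS exy /eqP->; exists x, y.
- apply/trivIsetP=> E1 E2 E1M E2M; move/implyP: (disjM E1) => /(_ E1M) /forallP.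
  by move=> /(_ E2) /implyP /(_ E2M) /implyP.
- apply/forallP=> E; apply/implyP=> /edgeM[x [y [xS yS exy ->]]].
  by apply/existsP; exists x; rewrite xS; apply/existsP; exists y; rewrite yS exy eqxx.
- apply/forallP=> E1; apply/implyP=> E1M; apply/forallP=> E2; apply/implyP=> E2M.
  by apply/implyP; apply: disjM.
Qed.

Lemma matching_edge M E : matching M -> E \in M -> exists x y, e x y /\ E = [set x; y].
Proof. by case/is_matchingP=> edgeM _ /edgeM[x [y [_ _ exy ->]]]; exists x, y. Qed.

Lemma matching_trivIset S M : is_matching e S M -> trivIset M.
Proof. by case/is_matchingP. Qed.

Lemma is_matchingS S M : is_matching e S M = matching M && (cover M \subset S).
Proof.
apply/is_matchingP/andP => [[edgeM tiM]|[/is_matchingP[edgeM tiM] coverS]]; split=> //.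
- apply/is_matchingP; split=> // E /edgeM[x [y [_ _ exy ->]]].
  by exists x, y; rewrite !inE.
- apply/subsetP=> z /bigcupP[E /edgeM[x [y [xS yS _ ->]]]].
  by rewrite !inE => /orP[]/eqP->.
- move=> E EM; have [x [y [_ _ exy defE]]] := edgeM E EM.
  have sub : E \subset S by apply: subset_trans coverS; apply: bigcup_sup.
  by exists x, y; rewrite !(subsetP sub) // defE !inE eqxx ?orbT.
Qed.

Lemma notin_cover M E v : v \notin cover M -> E \in M -> v \notin E.
Proof. by move=> vM EM; apply: contra vM => vE; apply/bigcupP; exists E. Qed.

Lemma card_matching_setU1 M x y : x \notin cover M -> #|[set x; y] |: M| = #|M|.+1.
Proof.
move=> xM; have EM : [set x; y] \notin M.
  by apply/negP=> /(notin_cover xM); rewrite !inE eqxx.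
by rewrite cardsU1 EM.
Qed.

Lemma matching_setU1 M x y :
  matching M -> e x y -> x \notin cover M -> y \notin cover M ->
  matching ([set x; y] |: M).
Proof.
case/is_matchingP=> edgeM /trivIsetP disjM exy xM yM; apply/is_matchingP; split.
  move=> E; rewrite !inE => /orP[/eqP->|/edgeM//]; by exists x, y; rewrite !inE.
have disj_xy E : E \in M -> [disjoint [set x; y] & E].
  move=> EM; rewrite disjoint_subset; apply/subsetP=> z; rewrite !inE.
  by case/orP=> /eqP->; apply: notin_cover EM.
apply/trivIsetP=> E1 E2; rewrite !inE => /orP[/eqP->|E1M] /orP[/eqP->|E2M] //.
- by rewrite eqxx.
- by move=> _; apply: disj_xy.
- by move=> _; rewrite disjoint_sym; apply: disj_xy.
- exact: disjM.
Qed.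

Lemma matching_subset M M0 : M0 \subset M -> matching M -> matching M0.
Proof.
move=> /subsetP subM /is_matchingP[edgeM tiM]; apply/is_matchingP; split.
  by move=> E /subM /edgeM.
by apply: trivIsetS tiM; apply/subsetP.
Qed.

Lemma matching_partner M v : matching M -> v \in cover M ->
  exists a M0, [/\ e v a, matching M0, v \notin cover M0 /\ a \notin cover M0,
                  #|M| = #|M0|.+1 & cover M = [set v; a] :|: cover M0].
Proof.
move=> matchM vM; have tiM := matching_trivIset matchM.
have EM := pblock_mem vM; have vE : v \in pblock M v by rewrite mem_pblock.
have [a defE eva] : exists2 a, pblock M v = [set v; a] & e v a.
  have [x [y [exy defE]]] := matching_edge matchM EM.
  move: vE; rewrite defE !inE => /orP[]/eqP->; first by exists y.
  by exists x; [rewrite setUC | rewrite e_sym].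
have coverM0 := coverD1 tiM EM; rewrite defE in EM coverM0.
exists a, (M :\ [set v; a]); split=> //.
- by apply: matching_subset matchM; apply: subsetDl.
- by rewrite coverM0 !inE !eqxx orbT.
- by rewrite (cardsD1 [set v; a]) EM.
- by rewrite -cover_setU1 setD1K.
Qed.

(* Follow the alternating path w, a, b, ... starting with the M-edge at w:
   if it stops after an M-edge, N augments along it; if it stops after an
   N-edge at x, flipping it trades w for x in M. *)
Lemma matching_augment_or_exchange M N w :
  matching M -> matching N -> w \in cover M -> w \notin cover N ->
  (exists2 N1, matching N1 & #|N1| = #|N|.+1 /\ cover N1 \subset cover M :|: cover N) \/
  (exists x M1, [/\ x \in cover N, matching M1, #|M1| = #|M|, w \notin cover M1
                   & cover M1 \subset x |: cover M]).
Proof.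
have [n] := ubnP #|M|; elim: n => // n IH in M N w *; move=> ltMn matchM matchN wM wN.
have [a [M0 [ewa matchM0 [wM0 aM0] cardM coverM]]] := matching_partner matchM wM.
have aw : a != w by apply: contraTneq ewa => ->; rewrite e_irr.
have [aN|aN] := boolP (a \in cover N); last first.
  left; exists ([set w; a] |: N); first exact: matching_setU1.
  split; first by rewrite card_matching_setU1.
  by rewrite cover_setU1 coverM; apply: setSU; apply: subsetUl.
have [b [N0 [eab matchN0 [aN0 bN0] cardN coverN]]] := matching_partner matchN aN.
have bw : b != w by apply: contraNneq wN => <-; rewrite coverN !inE eqxx orbT.
have wN0 : w \notin cover N0 by apply: contra wN; rewrite coverN inE => ->; rewrite orbT.
have [bM0|bM0] := boolP (b \in cover M0); last first.
  right; exists b, ([set a; b] |: M0); split.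
  - by rewrite coverN !inE eqxx orbT.
  - exact: matching_setU1.
  - by rewrite card_matching_setU1.
  - by rewrite cover_setU1 !inE !negb_or wM0 andbT !(eq_sym w) aw bw.
  - rewrite cover_setU1 coverM; apply/subsetP=> z; rewrite !inE.
    by case/orP=> [/orP[]|] ->; rewrite ?orbT.
have ltM0n : #|M0| < n by rewrite -ltnS -cardM.
have [[N1 matchN1 [cardN1 coverN1]]|[x [M1 [xN0 matchM1 cardM1 bM1 coverM1]]]] :=
  IH M0 N0 b ltM0n matchM0 matchN0 bM0 bN0.
  have notin_coverN1 z : z \notin cover M0 -> z \notin cover N0 -> z \notin cover N1.
    by move=> zM0 zN0; apply/negP=> /(subsetP coverN1); rewrite inE (negbTE zM0) (negbTE zN0).
  left; exists ([set w; a] |: N1); first by apply: matching_setU1; rewrite // notin_coverN1.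
  split; first by rewrite card_matching_setU1 ?notin_coverN1 // cardN1 cardN.
  rewrite cover_setU1 coverM coverN; apply/subsetP=> z; rewrite inE.
  case/orP=> [zwa|/(subsetP coverN1)]; first by rewrite in_setU (in_setU z) zwa.
  by rewrite !inE => /orP[]->; rewrite ?orbT.
have xa : x != a by apply: contraTneq xN0 => ->.
have aM1 : a \notin cover M1.
  by apply/negP=> /(subsetP coverM1); rewrite !inE (negbTE aM0) eq_sym (negbTE xa).
right; exists x, ([set a; b] |: M1); split.
- by rewrite coverN inE xN0 orbT.
- exact: matching_setU1.
- by rewrite card_matching_setU1 // cardM1 cardM.
- rewrite cover_setU1 !inE !negb_or !(eq_sym w) aw bw /=.
  have xw : x != w by apply: contraNneq wN => <-; rewrite coverN inE xN0 orbT.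
  by apply/negP=> /(subsetP coverM1); rewrite !inE (negbTE wM0) eq_sym (negbTE xw).
- rewrite cover_setU1 coverM; apply/subsetP=> z; rewrite in_setU.
  case/orP=> [|/(subsetP coverM1)]; rewrite !inE; last by case/orP=> ->; rewrite ?orbT.
  by case/orP=> /eqP->; rewrite ?bM0 ?eqxx !orbT.
Qed.

Lemma card_le_matching M X :
  matching M -> independent e X -> X \subset cover M -> #|X| <= #|M|.
Proof.
move=> matchM /independentP indX /subsetP XM.
have inj : {in X &, injective (pblock M)}.
  move=> x1 x2 x1X x2X eqE; have EM := pblock_mem (XM _ x1X).
  have [a [b [eab defE]]] := matching_edge matchM EM.
  have x1E : x1 \in pblock M x1 by rewrite mem_pblock XM.
  have x2E : x2 \in pblock M x1 by rewrite eqE mem_pblock XM.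
  move: x1E x2E; rewrite defE !inE => /orP[]/eqP ex1 /orP[]/eqP ex2; rewrite ex1 ex2 //.
  - by move: (indX _ _ x1X x2X); rewrite ex1 ex2 eab.
  - by move: (indX _ _ x2X x1X); rewrite ex1 ex2 eab.
rewrite -(card_in_imset inj); apply: subset_leq_card.
by apply/subsetP=> _ /imsetP[x xX ->]; apply: pblock_mem; apply: XM.
Qed.

End Matchings.

Section GallaiEdmonds.
Variables (T : finType) (e : rel T).
Hypotheses (e_sym : symmetric e) (e_irr : irreflexive e).
Implicit Types (S : {set T}) (M N : {set {set T}}).
Local Notation matching := (is_matching e setT).
Local Notation O := (GE_O e setT).

Lemma is_max_matchingP S M :
  reflect (is_matching e S M /\ forall M', is_matching e S M' -> #|M'| <= #|M|)
          (is_max_matching e S M).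
Proof.
apply: (iffP andP) => [[matchM /forallP maxM]|[matchM maxM]]; split=> //.
  by move=> M'; apply/implyP.
by apply/forallP=> M'; apply/implyP/maxM.
Qed.

Lemma max_matching_leq S M M' :
  is_max_matching e S M -> is_matching e S M' -> #|M| <= #|M'| ->
  is_max_matching e S M'.
Proof.
case/is_max_matchingP=> _ maxM matchM' leMM'; apply/is_max_matchingP; split=> //.
by move=> M'' /maxM /leq_trans; apply.
Qed.

Lemma GE_OP S v :
  reflect (v \in S /\ exists2 M, is_max_matching e S M & v \notin cover M)
          (v \in GE_O e S).
Proof.
rewrite inE; apply: (iffP andP) => [[vS /existsP[M /andP[maxM]]]|[vS [M maxM vM]]].
  by rewrite saturatesE; split=> //; exists M.
by split=> //; apply/existsP; exists M; rewrite maxM saturatesE.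
Qed.

Lemma max_matching_cover_edge M x y :
  is_max_matching e setT M -> e x y -> x \notin cover M -> y \in cover M.
Proof.
case/is_max_matchingP=> matchM maxM exy xM; apply/negPn/negP=> yM.
by have := maxM _ (matching_setU1 matchM exy xM yM); rewrite card_matching_setU1 // ltnn.
Qed.

Lemma max_matching_setD1 o M :
  o \in O -> is_max_matching e (setT :\ o) M -> is_max_matching e setT M.
Proof.
case/GE_OP=> _ [M0 maxM0 oM0] /is_max_matchingP[matchM maxM].
apply: (max_matching_leq maxM0); first by move: matchM; rewrite is_matchingS => /andP[].
apply: maxM; rewrite is_matchingS; case/is_max_matchingP: maxM0 => -> _ /=.
by apply/subsetP=> z zM0; rewrite !inE andbT; apply: contraNneq oM0 => <-.
Qed.

Lemma GE_O_second_neighbour o v :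
  o \in O -> v \in O -> e o v -> exists2 w, w \in O & w != o /\ e v w.
Proof.
case/GE_OP=> _ [M maxM oM] vO eov.
have /is_max_matchingP[matchM _] := maxM.
have vM := max_matching_cover_edge maxM eov oM.
have [w [M0 [evw matchM0 [vM0 wM0] cardM coverM]]] := matching_partner e_sym matchM vM.
have oM0 : o \notin cover M0 by apply: contra oM; rewrite coverM inE => ->; rewrite orbT.
have wo : w != o by apply: contraNneq oM => <-; rewrite coverM !inE eqxx orbT.
exists w; last by split.
apply/GE_OP; split; first exact: in_setT.
exists ([set o; v] |: M0).
  apply: (max_matching_leq maxM); first exact: matching_setU1.
  by rewrite cardM card_matching_setU1.
have wv : w != v by apply: contraTneq evw => ->; rewrite e_irr.
by rewrite cover_setU1 !inE !negb_or wM0 wo wv.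
Qed.

Lemma GE_O_setD1_nonadj o u : o \in O -> u \in GE_O e (setT :\ o) -> ~~ e o u.
Proof.
move=> oO /GE_OP[_ [M maxM uM]]; apply/negP=> eou.
have oM : o \notin cover M.
  case/is_max_matchingP: maxM; rewrite is_matchingS => /andP[_ /subsetP coverM] _.
  by apply/negP=> /coverM; rewrite !inE eqxx.
by move: uM; rewrite (max_matching_cover_edge (max_matching_setD1 oO maxM) eou oM).
Qed.

(* Exchange between a maximum matching M of G - o missing u and a maximum
   matching N of G missing w: N cannot be augmented, trading w for o would
   let uw augment M, and any other trade gives a maximum matching of G - o
   missing w. *)
Lemma GE_O_setD1_closed o u w :
  o \in O -> u \in GE_O e (setT :\ o) -> w \in O -> w != o -> e u w ->
  w \in GE_O e (setT :\ o).
Proof.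
move=> oO /GE_OP[uS [M maxM uM]] /GE_OP[_ [N maxN wN]] wo euw.
have maxMT := max_matching_setD1 oO maxM.
have /is_max_matchingP[matchMT maxMT_card] := maxMT.
have /is_max_matchingP[matchN maxN_card] := maxN.
have /is_max_matchingP[+ _] := maxM; rewrite is_matchingS => /andP[_ /subsetP coverM].
have wM := max_matching_cover_edge maxMT euw uM.
have [[N1 matchN1 [cardN1 _]]|[x [M1 [_ matchM1 cardM1 wM1 coverM1]]]] :=
  matching_augment_or_exchange e_sym e_irr matchMT matchN wM wN.
  by have := maxN_card _ matchN1; rewrite cardN1 ltnn.
have uo : u != o by move: uS; rewrite !inE andbT.
have [xo|xo] := eqVneq x o.
  have uM1 : u \notin cover M1.
    by apply/negP=> /(subsetP coverM1); rewrite xo !inE (negbTE uo) (negbTE uM).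
  have := maxMT_card _ (matching_setU1 matchM1 euw uM1 wM1).
  by rewrite card_matching_setU1 // cardM1 ltnn.
apply/GE_OP; split; first by rewrite !inE andbT.
exists M1 => //; apply: (max_matching_leq maxM); last by rewrite cardM1.
rewrite is_matchingS matchM1; apply/subsetP=> z /(subsetP coverM1).
by case/setU1P=> [->|/coverM //]; rewrite !inE xo.
Qed.

Lemma GE_P_intro S z :
  z \in S -> z \notin GE_O e S -> {in GE_O e S, forall u, ~~ e u z} -> z \in GE_P e S.
Proof.
move=> zS zO noadj; rewrite in_setD zS andbT in_setU (negbTE zO) orbF inE zS zO /=.
by apply/existsP=> -[u /andP[uO euz]]; move: (noadj u uO); rewrite euz.
Qed.

Lemma GE_P_setD1_edge o v :
  o \in O -> v \in O -> e o v ->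
  exists x y, [/\ x \in GE_P e (setT :\ o), y \in GE_P e (setT :\ o) & e x y].
Proof.
move=> oO vO eov; have [y yO [yo evy]] := GE_O_second_neighbour oO vO eov.
have vo : v != o by apply: contraTneq eov => ->; rewrite e_irr.
have vO' : v \notin GE_O e (setT :\ o) by apply: contraL eov; apply: GE_O_setD1_nonadj.
have inP z : z \in O -> z != o -> z \notin GE_O e (setT :\ o) -> z \in GE_P e (setT :\ o).
  move=> zO zo zO'; apply: (GE_P_intro _ zO'); first by rewrite !inE zo.
  by move=> u uO'; apply: contra zO'; apply: GE_O_setD1_closed.
have yO' : y \notin GE_O e (setT :\ o).
  by apply: contra vO' => yO'; apply: (GE_O_setD1_closed oO yO' vO vo); rewrite e_sym.
by exists v, y; rewrite !inP.
Qed.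

Lemma surplus_ge_card k X :
  surplus_ge e k -> independent e X -> X != set0 -> #|X| + k <= #|nbhd e setT X|.
Proof. by move=> /forallP/(_ X)/implyP surp indX X0; apply: surp; rewrite indX. Qed.

Lemma surplus_ge_neighbour k x : surplus_ge e k.+1 -> exists y, e x y.
Proof.
move=> surp; have ind1 : independent e [set x].
  by apply/independentP=> y z /set1P-> /set1P->; rewrite e_irr.
have x0 : [set x] != set0 by rewrite -card_gt0 cards1.
have /card_gt0P[y] : 0 < #|nbhd e setT [set x]|.
  by apply: leq_trans (surplus_ge_card surp ind1 x0); rewrite addnS.
by rewrite !inE => /and3P[_ _ /existsP[x' /andP[/set1P-> exy]]]; exists y.
Qed.

Lemma GE_I_sub_cover S M : is_max_matching e S M -> GE_I e S \subset cover M.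
Proof.
move=> maxM; apply/subsetP=> i; rewrite inE => /and3P[iS iO _].
by apply: contraR iO => iM; apply/GE_OP; split=> //; exists M.
Qed.

Section IndependentIP.
Hypothesis indIP : independent e (GE_I e setT :|: GE_P e setT).

Lemma GE_O_edge x y : e x y -> (x \in O) || (y \in O).
Proof.
have IP z : z \notin O -> z \in GE_I e setT :|: GE_P e setT.
  by move=> zO; rewrite in_setU in_setD in_setU (negbTE zO) orbF in_setT andbT orbN.
move=> exy; apply/norP=> -[/IP xIP /IP yIP].
by move/independentP: indIP => /(_ x y xIP yIP); rewrite exy.
Qed.

Lemma card_matching_le_GE_O M : matching M -> #|M| <= #|O|.
Proof.
move=> matchM; apply: leq_card_trivIset (matching_trivIset matchM) _.
move=> E /(matching_edge matchM)[x [y [exy ->]]]; apply/set0Pn.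
by case/orP: (GE_O_edge exy) => ?; [exists x|exists y]; rewrite in_setI in_set2 eqxx ?orbT.
Qed.

Variable k : nat.
Hypotheses (T_gt0 : 0 < #|T|) (surp : surplus_ge e k.+1).

Lemma GE_O_neq0 : O != set0.
Proof.
have [t _] := card_gt0P T_gt0; have [y ety] := surplus_ge_neighbour t surp.
by apply/set0Pn; case/orP: (GE_O_edge ety) => ?; [exists t|exists y].
Qed.

Lemma GE_O_not_independent : ~~ independent e O.
Proof.
apply/negP=> indO; have /set0Pn[o oO] := GE_O_neq0.
have [_ [M maxM _]] := GE_OP _ _ oO; have /is_max_matchingP[matchM _] := maxM.
have indI : independent e (GE_I e setT) by apply: independentS indIP; apply: subsetUl.
have IM := card_le_matching matchM indI (GE_I_sub_cover maxM).
have MO := card_matching_le_GE_O matchM.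
have := leq_trans (surplus_ge_card surp indO GE_O_neq0) (leq_trans IM MO).
by rewrite addnS ltnNge leq_addr.
Qed.

Lemma GE_O_two_neighbours : exists2 o, o \in O & 2 <= #|[set v in O | e o v]|.
Proof.
have /forall_inPn[x xO /forall_inPn[y yO /negPn exy]] := GE_O_not_independent.
have [z zO [zx eyz]] := GE_O_second_neighbour xO yO exy.
exists y => //; apply: leq_trans (subset_leq_card (_ : [set x; z] \subset _)).
  by rewrite cards2 eq_sym zx.
by apply/subsetP=> w /set2P[]->; rewrite in_set ?xO ?zO // e_sym.
Qed.

End IndependentIP.

End GallaiEdmonds.

Theorem lemma5 (T : finType) (e : rel T)
  (e_sym : symmetric e) (e_irr : irreflexive e)
  (hne : 0 < #|T|) (hsurp : surplus_ge e 2)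
  (hIP : independent e (GE_I e [set: T] :|: GE_P e [set: T])) :
  (exists2 o, o \in GE_O e [set: T] &
     2 <= #|[set v in GE_O e [set: T] | e o v]|) /\
  (forall o v : T, o \in GE_O e [set: T] -> v \in GE_O e [set: T] -> e o v ->
     exists x y : T,
       [/\ x \in GE_P e ([set: T] :\ o), y \in GE_P e ([set: T] :\ o) & e x y]).
Proof.
split; first exact: (GE_O_two_neighbours e_sym e_irr hIP hne hsurp).
exact: GE_P_setD1_edge.
Qed.
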